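(* Consider a controllability network as in the context, with fixed graph, scheduling, quantization parameters $U_{\max}>0$, $\delta_u>0$, slot duration $\Delta>0$, and a rate bound $\bar R_e$ for a link $e\in E_R$. There is a constant $\kappa_e\ge0$ (depending only on $\bar R_e,\Delta,U_{\max},\delta_u$) such that for every weight vector $\mathbf w_R$ for which $\alpha_{\bar e}\neq0$ for all $\bar e\in E_R$, one has $R_e\le\bar R_e$ if and only if $|\alpha_e|-\kappa_e|\alpha_{\bar e}|\le0$ for all $\bar e\in E_R$; each $\alpha_{\bar e}$ is a polynomial in the entries of $\mathbf w_R$, so that the rate constraint $R_e\le\bar R_e$ is a polynomial constraint in $\mathbf w_R$. The analogous statement holds for links of the observability network (with $Y_{\max},\delta_y$ and $\mathbf w_O$).
   Context: The controllability network is an acyclic directed graph $(V_R,E_R)$ with controller node $v_c$ and actuator node $v_u$, and weight function $W_R:E_R\to\mathbb R$; $\mathbf w_R=(W_R(e))_{e\in E_R}$. For a directed path, its weight is the product of the weights of its edges. Computational model 1: each node sums the data received on incoming links and transmits on each outgoing link the sum multiplied by that link's weight. For a link $e=(v,v')\in E_R$, $\alpha_e$ is the sum of the weights of all directed paths that start at $v_c$ and end with the link $e$. Actuation data are quantized with width $\delta_u$ over the range $[-U_{\max},U_{\max}]$, and each link transmits during a time slot of duration $\Delta$; the data rate of link $e$ is $$R_e=\Delta^{-1}\left\lceil \log_2\left(\frac{2U_{\max}}{\delta_u}\cdot\frac{|\alpha_e|}{\min_{\bar e\in E_R}|\alpha_{\bar e}|}\right)\right\rceil .$$ The observability network $(V_O,E_O)$,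 with sensor node as source, weights $W_O$, $\mathbf w_O$, quantization parameters $\delta_y$, $Y_{\max}$, and quantities $\alpha_e,R_e$ for $e\in E_O$, is defined analogously. *)

From mathcomp Require Import all_boot all_order all_algebra.
From mathcomp Require Import all_classical all_reals all_analysis.
From mathcomp Require mpoly.
Set Implicit Arguments. Unset Strict Implicit. Unset Printing Implicit Defensive.
Import Order.TTheory GRing.Theory Num.Theory.
Local Open Scope ring_scope.

Fixpoint consecutive (V E : finType) (src tgt : E -> V) (e : E) (p : seq E)
  : bool :=
  if p is e' :: p' then (tgt e == src e') && consecutive src tgt e' p'
  else true.

Definition acyclic (V E : finType) (src tgt : E -> V) : Prop :=
  forall (e : E) (p : seq E),
    consecutive src tgt e p -> tgt (last e p) != src e.

Definition path_from_to (V E : finType) (src tgt : E -> V) (v : V) (e : E)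
  (e0 : E) (p : seq E) : bool :=
  [&& src e0 == v, consecutive src tgt e0 p & last e0 p == e].

Definition path_weight (R : pzRingType) (E : finType) (w : E -> R)
  (e0 : E) (p : seq E) : R :=
  w e0 * \prod_(x <- p) w x.

(* In an acyclic graph a directed path visits pairwise
   distinct nodes, hence has at most #|V| - 1 links, so its tail has fewer
   than #|V| links; the sum over tails of length k < #|V| therefore ranges
   over all such paths (each exactly once). *)
Definition alpha (R : pzRingType) (V E : finType) (src tgt : E -> V) (v : V)
  (w : E -> R) (e : E) : R :=
  \sum_(k < #|V|) \sum_(e0 : E) \sum_(p : k.-tuple E | path_from_to src tgt v e e0 p)
     path_weight w e0 p.

Definition log2 (R : realType) (x : R) : R := ln x / ln 2.

Definition rate (R : realType) (V E : finType) (src tgt : E -> V) (v : V)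
  (w : E -> R) (Umax delta Delta : R) (e : E) : R :=
  let a := alpha src tgt v w in
  let amin := \big[Order.min/`|a e|]_(e' : E) `|a e'| in
  Delta^-1 * (Num.ceil (log2 ((2 * Umax / delta) * (`|a e| / amin))))%:~R.

(* Since ceil(log2 x) is an integer, Delta^-1 ceil(log2 x) <= Rbar holds iff
   x <= 2^floor(Delta Rbar).  With x = (2 Umax / delta) |alpha_e| / min |alpha| this says
   |alpha_e| <= kappa |alpha_e'| for every link e', where
   kappa = 2^floor(Delta Rbar) delta / (2 Umax).  As alpha is a sum of products of link
   weights it commutes with ring morphisms; evaluating it at the variables of a polynomial
   ring exhibits it as a polynomial in the weights. *)

From mathcomp Require Import all_boot all_order all_algebra.
From mathcomp Require Import reals exp.
From mathcomp Require Import mpoly.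
Import Order.TTheory GRing.Theory Num.Theory.
Local Open Scope ring_scope.

Section RateConstraint.

Variable R : realType.

Lemma ceil_log2_le (x r : R) : 0 < x ->
  ((Num.ceil (log2 x))%:~R <= r) = (x <= 2 `^ (Num.floor r)%:~R).
Proof.
move=> x_gt0; have ln2_gt0 : 0 < ln (2 : R) by rewrite ln_gt0 ?ltr1n.
rewrite -floor_ge_int ceil_le_int /log2 ler_pdivrMr // -ln_powR.
by rewrite ler_ln ?posrE ?powR_gt0.
Qed.

Lemma ratio_bigmin_le (I : finType) (F : I -> R) (i0 : I) (k : R) :
  (forall i, 0 < F i) -> 0 < k ->
  F i0 / \big[Order.min/F i0]_i F i <= k <-> forall i, F i0 - k * F i <= 0.
Proof.
move=> F_gt0 k_gt0; have min_gt0 : 0 < \big[Order.min/F i0]_i F i.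
  by apply/bigmin_gtP; split=> // i _.
have le_scaled i : (F i0 - k * F i <= 0) = (F i0 / k <= F i).
  by rewrite subr_le0 mulrC ler_pdivrMr.
rewrite ler_pdivrMr // [k * _]mulrC -ler_pdivrMr //.
split=> [/bigmin_geP[_ le_min] i | le_F]; first by rewrite le_scaled le_min.
by apply/bigmin_geP; split=> [|i _]; rewrite -le_scaled.
Qed.

Definition rate_threshold (Rbar Delta Umax delta : R) : R :=
  2 `^ (Num.floor (Delta * Rbar))%:~R * delta / (2 * Umax).

Lemma rate_threshold_gt0 (Rbar Delta : R) {Umax delta : R} :
  0 < Umax -> 0 < delta -> 0 < rate_threshold Rbar Delta Umax delta.
Proof. by move=> Umax_gt0 delta_gt0; rewrite !divr_gt0 ?mulr_gt0 ?powR_gt0. Qed.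

Lemma rate_le_iff (V E : finType) (src tgt : E -> V) (v : V) (w : E -> R)
    (Rbar Delta Umax delta : R) (e : E) :
  0 < Delta -> 0 < Umax -> 0 < delta ->
  (forall e', alpha src tgt v w e' != 0) ->
  rate src tgt v w Umax delta Delta e <= Rbar <->
  forall e', `|alpha src tgt v w e|
             - rate_threshold Rbar Delta Umax delta * `|alpha src tgt v w e'| <= 0.
Proof.
move=> Delta_gt0 Umax_gt0 delta_gt0 alpha_neq0.
set a := alpha src tgt v w.
have a_gt0 e' : 0 < `|a e'| by rewrite normr_gt0.
have c_gt0 : 0 < 2 * Umax / delta by rewrite divr_gt0 ?mulr_gt0.
have ratio_gt0 : 0 < `|a e| / \big[Order.min/`|a e|]_e' `|a e'|.
  by rewrite divr_gt0 //; apply/bigmin_gtP; split=> // e' _.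
have threshold_E : (2 * Umax / delta)^-1 * 2 `^ (Num.floor (Delta * Rbar))%:~R
                   = rate_threshold Rbar Delta Umax delta.
  by rewrite /rate_threshold invf_div mulrC mulrA.
rewrite /rate -/a ler_pdivrMl // ceil_log2_le ?(mulr_gt0 c_gt0 ratio_gt0) //.
rewrite -(ler_pdivlMl _ _ c_gt0) threshold_E.
exact: ratio_bigmin_le _ _ _ _ a_gt0 (rate_threshold_gt0 Rbar Delta Umax_gt0 delta_gt0).
Qed.

End RateConstraint.

Lemma rmorph_alpha (S T : pzRingType) (f : {rmorphism S -> T})
    (V E : finType) (src tgt : E -> V) (v : V) (w : E -> S) (e : E) :
  f (alpha src tgt v w e) = alpha src tgt v (f \o w) e.
Proof.
rewrite /alpha /path_weight rmorph_sum; apply: eq_bigr => k _.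
rewrite rmorph_sum; apply: eq_bigr => e0 _.
rewrite rmorph_sum; apply: eq_bigr => p _.
by rewrite rmorphM rmorph_prod.
Qed.

Lemma alpha_meval (S : comNzRingType) (V E : finType) (src tgt : E -> V) (v : V)
    (w : E -> S) (e : E) :
  alpha src tgt v w e
  = (alpha src tgt v (fun x => 'X_(enum_rank x)) e : {mpoly S[#|E|]}).@[w \o enum_val].
Proof.
rewrite rmorph_alpha; apply: eq_bigr => k _; apply: eq_bigr => e0 _.
have evalX x : ('X_(enum_rank x) : {mpoly S[#|E|]}).@[w \o enum_val] = w x.
  by rewrite mevalXU /= enum_rankK.
apply: eq_bigr => p _; rewrite /path_weight /= evalX.
by congr (_ * _); apply: eq_bigr => x _; rewrite evalX.
Qed.

Theorem proposition4 (R : realType) :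
  exists kappa : R -> R -> R -> R -> R,
  forall (Rbar Delta Umax delta : R),
    0 < Delta -> 0 < Umax -> 0 < delta ->
    0 <= kappa Rbar Delta Umax delta /\
    forall (V E : finType) (src tgt : E -> V) (vc : V),
      acyclic src tgt ->
      forall e : E,
        (forall w : E -> R,
           (forall e' : E, alpha src tgt vc w e' != 0) ->
           (rate src tgt vc w Umax delta Delta e <= Rbar <->
            forall e' : E,
              `|alpha src tgt vc w e| - kappa Rbar Delta Umax delta * `|alpha src tgt vc w e'| <= 0))
        /\
        (forall e' : E, exists P : mpoly.mpoly #|E| R,
           forall w : E -> R,
             alpha src tgt vc w e' = mpoly.meval (fun i : 'I_#|E| => w (enum_val i)) P).
Proof.
exists (@rate_threshold R) => Rbar Delta Umax delta Delta_gt0 Umax_gt0 delta_gt0.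
split; first exact/ltW/rate_threshold_gt0.
move=> V E src tgt vc _ e; split=> [w alpha_neq0 | e'].
  exact: rate_le_iff.
exists (alpha src tgt vc (fun x => 'X_(enum_rank x)) e') => w.
exact: alpha_meval.
Qed.
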